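(* Let $S$ be a semidomain that is not an integral domain. Then the polynomials $x+1$, $x^2+x+1$, $x^3+1$, and $x^4+x^2+1$ are irreducible in $S[x]$.
   Context: A semidomain is a subset $S$ of an integral domain $R$ containing $0$ and $1$ and closed under addition and multiplication; $S$ is an integral domain precisely when it is also closed under additive inverses. $S[x]$ is the semidomain of polynomials in $R[x]$ with coefficients in $S$. An element $a\in S[x]\setminus\{0\}$ is irreducible if it is not a unit of the multiplicative monoid $S[x]\setminus\{0\}$ and $a=bc$ with $b,c\in S[x]\setminus\{0\}$ forces $b$ or $c$ to be a unit. *)

From mathcomp Require Import all_boot all_algebra.
Set Implicit Arguments. Unset Strict Implicit. Unset Printing Implicit Defensive.
Import GRing.Theory.
Local Open Scope ring_scope.

Definition semidomain (R : idomainType) (S : R -> Prop) : Prop :=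
  [/\ S 0, S 1,
      (forall a b, S a -> S b -> S (a + b)) &
      (forall a b, S a -> S b -> S (a * b))].

(* S is closed under additive inverses (i.e. S is an integral domain). *)
Definition closed_opp (R : idomainType) (S : R -> Prop) : Prop :=
  forall a, S a -> S (- a).

Definition inSx (R : idomainType) (S : R -> Prop) (p : {poly R}) : Prop :=
  forall i : nat, S p`_i.

Definition Sx_unit (R : idomainType) (S : R -> Prop) (p : {poly R}) : Prop :=
  [/\ inSx S p, p != 0 & exists q, [/\ inSx S q, q != 0 & p * q = 1]].

Definition Sx_irreducible (R : idomainType) (S : R -> Prop) (a : {poly R}) : Prop :=
  [/\ inSx S a, a != 0, ~ Sx_unit S a &
      forall b c, inSx S b -> b != 0 -> inSx S c -> c != 0 ->
        a = b * c -> Sx_unit S b \/ Sx_unit S c].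

(* The leading coefficients of the two factors of a monic polynomial are
   mutually inverse elements of S, so rescaling each factor by the other's
   leading coefficient turns any factorization into non-units into one into
   monic factors of positive degree with coefficients in S.  For each of the
   four polynomials, comparing coefficients in such a factorization writes -1
   as a product of coefficients of the factors, so -1 lies in S, and then S is
   closed under negation. *)

From mathcomp Require Import all_boot all_algebra.
From mathcomp Require Import ring zify.
Set Implicit Arguments. Unset Strict Implicit.
Import GRing.Theory.
Local Open Scope ring_scope.

Lemma prod1_sum1_expr3 (R : comPzRingType) (x y : R) :
  x * y = 1 -> x + y = 1 -> x ^+ 3 = -1.
Proof.
move=> xy1 xDy1; apply/eqP; rewrite -addr_eq0.
have -> : x ^+ 3 + 1 = (x + 1) * (x * (x + y - 1) - (x * y - 1)) by ring.
by rewrite xy1 xDy1 !subrr mulr0 subr0 mulr0.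
Qed.

Lemma monicXnD (R : nzSemiRingType) n (q : {poly R}) :
  (size q <= n)%N -> 'X^n + q \is monic /\ size ('X^n + q) = n.+1.
Proof.
move=> szq; have ltq : (size q < size ('X^n : {poly R}))%N by rewrite size_polyXn.
by rewrite monicE lead_coefDl // lead_coefXn size_polyDl // size_polyXn.
Qed.

Lemma monic_size2E (R : nzSemiRingType) (b : {poly R}) :
  b \is monic -> size b = 2 -> b = 'X + (b`_0)%:P.
Proof.
move=> /monicP lb1 szb; apply/polyP => -[|[|i]]; rewrite !coefE //=.
- by rewrite add0r.
- by rewrite addr0 -lb1 /lead_coef szb.
- by rewrite addr0 nth_default // szb.
Qed.

Lemma monic_size3E (R : nzSemiRingType) (b : {poly R}) :
  b \is monic -> size b = 3 -> b = 'X^2 + (b`_1)%:P * 'X + (b`_0)%:P.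
Proof.
move=> /monicP lb1 szb; apply/polyP => -[|[|[|i]]]; rewrite !coefE /=.
- by rewrite mulr0 !add0r.
- by rewrite mulr1 add0r addr0.
- by rewrite -lb1 /lead_coef szb mulr0 !addr0.
- by rewrite mulr0 !addr0 nth_default // szb.
Qed.

Lemma XaddC_factor_coef (R : comNzRingType) (u : R) (c : {poly R}) m :
  c`_m.+1 = 1 -> (('X + u%:P) * c)`_m.+1 = 0 -> (('X + u%:P) * c)`_0 = 1 ->
  c`_m * c`_0 = -1.
Proof.
rewrite mulrDl !coefE /= => ->; rewrite mulr1 add0r => /eqP.
by rewrite addr_eq0 => /eqP -> <-; rewrite mulNr.
Qed.

(* Comparing coefficients in (X^2 + b1 X + b0) (X^2 + c1 X + c0) = X^4 + X^2 + 1. *)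
Lemma X4X21_quadratic_factors (R : idomainType) (b0 b1 c0 c1 : R) :
  c1 + b1 = 0 -> c0 + b1 * c1 + b0 = 1 -> b1 * c0 + b0 * c1 = 0 -> b0 * c0 = 1 ->
  [\/ b0 ^+ 3 = -1, b1 * c1 = -1 | b0 = -1].
Proof.
move=> e3 e2 e1 e0; have [b1_0|b1N0] := eqVneq b1 0.
  apply: Or31; apply: (prod1_sum1_expr3 e0).
  by move: e2; rewrite b1_0 mul0r addr0 addrC.
have ec0 : c0 = b0.
  have : b1 * (c0 - b0) = 0.
    by rewrite -e1 -[c1](addrK b1) e3 sub0r; ring.
  by move/eqP; rewrite mulf_eq0 (negbTE b1N0) subr_eq0 => /eqP.
have : (b0 - 1) * (b0 + 1) = b0 * c0 - 1 by rewrite ec0; ring.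
rewrite e0 subrr => /eqP; rewrite mulf_eq0 subr_eq0 addr_eq0.
case/orP=> [/eqP b0_1|/eqP]; last exact: Or33.
apply: Or32; transitivity (c0 + b1 * c1 + b0 - b0 - c0); first by ring.
by rewrite e2 ec0 b0_1; ring.
Qed.

Lemma size_monic_factors (R : nzSemiRingType) (p b c : {poly R}) :
  b \is monic -> c \is monic -> p = b * c -> (size b + size c)%N = (size p).+1.
Proof.
move=> mb mc ->; rewrite size_Mmonic ?monic_neq0 // prednK //.
by rewrite addn_gt0 size_poly_gt0 monic_neq0.
Qed.

Section Semidomain.

Variables (R : idomainType) (S : R -> Prop).
Hypothesis semidomainS : semidomain S.

Let S_0 : S 0. Proof. by case: semidomainS. Qed.
Let S_1 : S 1. Proof. by case: semidomainS. Qed.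
Let S_add a b : S a -> S b -> S (a + b).
Proof. by case: semidomainS => _ _ + _; apply. Qed.
Let S_mul a b : S a -> S b -> S (a * b).
Proof. by case: semidomainS => _ _ _; apply. Qed.

Let S_exp a n : S a -> S (a ^+ n).
Proof. by move=> Sa; elim: n => [|n IHn]; rewrite ?expr0 // exprS; apply: S_mul. Qed.

Lemma S_bool (b : bool) : S b%:R.
Proof. by case: b. Qed.

Lemma inSx_polyC a : S a -> inSx S a%:P.
Proof. by move=> Sa i; rewrite coefC; case: eqP. Qed.

Lemma inSxZ a p : S a -> inSx S p -> inSx S (a *: p).
Proof. by move=> Sa Sp i; rewrite coefZ; apply: S_mul. Qed.

Lemma closed_opp_SN1 : S (-1) -> closed_opp S.
Proof. by move=> SN1 a Sa; rewrite -mulN1r; apply: S_mul. Qed.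

Lemma Sx_unit_size p : Sx_unit S p -> size p = 1.
Proof.
case=> _ _ [q [_ _ pq1]]; have : p \is a GRing.unit by apply/unitrPr; exists q.
by rewrite poly_unitE => /andP[/eqP].
Qed.

Lemma Sx_unit_polyC a a' : S a -> S a' -> a * a' = 1 -> Sx_unit S a%:P.
Proof.
move=> Sa Sa' aa'1; split; first exact: inSx_polyC.
  by rewrite polyC_eq0; apply: contra_eq_neq aa'1 => ->; rewrite mul0r eq_sym oner_neq0.
exists a'%:P; split; first exact: inSx_polyC.
  by rewrite polyC_eq0; apply: contra_eq_neq aa'1 => ->; rewrite mulr0 eq_sym oner_neq0.
by rewrite -polyCM aa'1.
Qed.

Lemma Sx_factor_monic p b c :
  p \is monic -> inSx S b -> inSx S c -> p = b * c ->
  [\/ Sx_unit S b, Sx_unit S c |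
      exists b' c', [/\ b' \is monic, c' \is monic, inSx S b', inSx S c' &
                     [/\ p = b' * c', (1 < size b')%N & (1 < size c')%N]]].
Proof.
move=> /monicP lp1 Sb Sc pE.
have lbc : lead_coef b * lead_coef c = 1 by rewrite -lead_coefM -pE.
have Slb : S (lead_coef b) by apply: Sb.
have Slc : S (lead_coef c) by apply: Sc.
have [szb|ltb] := leqP (size b) 1.
  apply: Or31; move: lbc; rewrite (size1_polyC szb) lead_coefC.
  exact: Sx_unit_polyC.
have [szc|ltc] := leqP (size c) 1.
  apply: Or32; move: lbc; rewrite (size1_polyC szc) lead_coefC mulrC.
  exact: Sx_unit_polyC.
have lb0 : lead_coef b != 0.
  by apply: contra_eq_neq lbc => ->; rewrite mul0r eq_sym oner_neq0.
have lc0 : lead_coef c != 0.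
  by apply: contra_eq_neq lbc => ->; rewrite mulr0 eq_sym oner_neq0.
apply: Or33; exists (lead_coef c *: b), (lead_coef b *: c).
split.
- by rewrite monicE lead_coefZ mulrC lbc.
- by rewrite monicE lead_coefZ lbc.
- exact: inSxZ.
- exact: inSxZ.
split; rewrite ?size_scale //.
rewrite -scalerAl -(scalerAr (lead_coef b) b c) scalerA (mulrC (lead_coef c)).
by rewrite lbc scale1r.
Qed.

Lemma Sx_irreducible_monic p :
  p \is monic -> (1 < size p)%N -> inSx S p ->
  (forall b c, b \is monic -> c \is monic -> inSx S b -> inSx S c ->
     (1 < size b <= size c)%N -> p = b * c -> False) ->
  Sx_irreducible S p.
Proof.
move=> mp szp Sp noFactor; split => //; first exact: monic_neq0.
  by move/Sx_unit_size => sz1; rewrite sz1 in szp.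
move=> b c Sb _ Sc _ pE.
case: (Sx_factor_monic mp Sb Sc pE) => [ub|uc|[b' [c' [mb mc Sb' Sc' [pE' szb szc]]]]].
- by left.
- by right.
exfalso; have [le|lt] := leqP (size b') (size c').
  by apply: (noFactor b' c' mb mc Sb' Sc' _ pE'); rewrite szb le.
apply: (noFactor c' b' mc mb Sc' Sb'); first by rewrite szc ltnW.
by rewrite pE' mulrC.
Qed.

Lemma Sx_irreducible_X1 : Sx_irreducible S ('X + 1).
Proof.
apply: Sx_irreducible_monic.
- by rewrite -polyC1 monicXaddC.
- by rewrite -polyC1 size_XaddC.
- by move=> i; rewrite !coefE; apply: S_add; apply: S_bool.
move=> b c mb mc _ _ /andP[szb szbc] pE.
by have := size_monic_factors mb mc pE; rewrite -polyC1 size_XaddC; lia.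
Qed.

Hypothesis notSN1 : ~ S (-1).

Lemma Sx_irreducible_X2X1 : Sx_irreducible S ('X^2 + 'X + 1).
Proof.
have [|mp szp] := @monicXnD R 2 ('X + 1); first by rewrite -polyC1 size_XaddC.
rewrite addrA in mp szp.
apply: Sx_irreducible_monic => //; first by rewrite szp.
  by move=> i; rewrite !coefE; do !apply: S_add; apply: S_bool.
move=> b c mb mc Sb Sc /andP[szb szbc] pE.
have := size_monic_factors mb mc pE; rewrite szp => szbc4.
have {}szb : size b = 2 by lia.
have {szbc} szc : size c = 2 by lia.
rewrite (monic_size2E mb szb) (monic_size2E mc szc) in pE.
have := congr1 (coefp 0) pE; have := congr1 (coefp 1) pE.
rewrite /= !mulrDl !coefE /= ?(add0r, addr0, mulr1) => /esym sum1 /esym prod1.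
apply: notSN1; rewrite -(prod1_sum1_expr3 prod1); last by rewrite addrC.
exact/S_exp/Sb.
Qed.

Lemma Sx_irreducible_X3_1 : Sx_irreducible S ('X^3 + 1).
Proof.
apply: Sx_irreducible_monic.
- by rewrite -polyC1 monicXnaddC.
- by rewrite -polyC1 size_XnaddC.
- by move=> i; rewrite !coefE; apply: S_add; apply: S_bool.
move=> b c mb mc Sb Sc /andP[szb szbc] pE.
have := size_monic_factors mb mc pE; rewrite -polyC1 size_XnaddC // => szbc5.
have {}szb : size b = 2 by lia.
have c2 : c`_2 = 1 by rewrite -(monicP mc) /lead_coef; congr (c`_ _); lia.
rewrite (monic_size2E mb szb) in pE.
have := XaddC_factor_coef (u := b`_0) c2; rewrite -pE !coefE /= !add0r.
by move=> /(_ erefl erefl) cN1; apply: notSN1; rewrite -cN1; apply: S_mul.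
Qed.

Lemma Sx_irreducible_X4X21 : Sx_irreducible S ('X^4 + 'X^2 + 1).
Proof.
have [|mp szp] := @monicXnD R 4 ('X^2 + 1); first by rewrite -polyC1 size_XnaddC.
rewrite addrA in mp szp.
apply: Sx_irreducible_monic => //; first by rewrite szp.
  by move=> i; rewrite !coefE; do !apply: S_add; apply: S_bool.
move=> b c mb mc Sb Sc /andP[szb szbc] pE.
have := size_monic_factors mb mc pE; rewrite szp => szbc6.
have [szb2|szb3] : size b = 2 \/ size b = 3 by lia.
  rewrite (monic_size2E mb szb2) in pE.
  have c3 : c`_3 = 1 by rewrite -(monicP mc) /lead_coef; congr (c`_ _); lia.
  have := XaddC_factor_coef (u := b`_0) c3; rewrite -pE !coefE /= !add0r.
  by move=> /(_ erefl erefl) cN1; apply: notSN1; rewrite -cN1; apply: S_mul.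
have szc3 : size c = 3 by lia.
rewrite (monic_size3E mb szb3) (monic_size3E mc szc3) in pE.
have := congr1 (coefp 0) pE; have := congr1 (coefp 1) pE.
have := congr1 (coefp 2) pE; have := congr1 (coefp 3) pE.
rewrite /= !mulrDl -!mulrA !coefE /= ?(add0r, addr0, mulr0, mulr1).
move=> /esym e3 /esym e2 /esym e1 /esym e0; apply: notSN1.
have [<-|<-|<-] := X4X21_quadratic_factors e3 e2 e1 e0.
- exact/S_exp/Sb.
- by apply: S_mul; [apply: Sb | apply: Sc].
- exact: Sb.
Qed.

End Semidomain.

Theorem lemma5p2 (R : idomainType) (S : R -> Prop) :
  semidomain S -> ~ closed_opp S ->
  [/\ Sx_irreducible S ('X + 1),
      Sx_irreducible S ('X^2 + 'X + 1),
      Sx_irreducible S ('X^3 + 1) &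
      Sx_irreducible S ('X^4 + 'X^2 + 1)].
Proof.
move=> semidomainS notclosed.
have notSN1 : ~ S (-1) by move/(closed_opp_SN1 semidomainS).
split; [exact: Sx_irreducible_X1 | exact: Sx_irreducible_X2X1 |
        exact: Sx_irreducible_X3_1 | exact: Sx_irreducible_X4X21].
Qed.
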